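(* Let $\mathcal S\subseteq\mathcal X\cup\mathcal Y\cup\mathcal Z$ be a set of items with $w_Z(\mathcal S)\le t-1$, $w_Y(\mathcal S)\le T$, $p_Z(\mathcal S)\ge t-1$, $p_Y(\mathcal S)\ge T$, and such that there is no set $\mathcal S'\subseteq\mathcal X\cup\mathcal Y\cup\mathcal Z$ with $w(\mathcal S')\le w(\mathcal S)$ and $p(\mathcal S')>p(\mathcal S)$. Then there exists $i\in\{0,\dots,t-1\}$ with $\mathcal S\cap\mathcal Y=\mathcal Y_i$ and $\mathcal S\cap\mathcal Z=\mathcal Z_i$.
   Context: Let $n\ge1$, $B_n=\sum_{j=1}^{3n}(3n+1)^j$, $\widetilde{\mathcal A}_n=\{(3n+1)^{j_1}+(3n+1)^{j_2}+(3n+1)^{j_3}: j_1,j_2,j_3\in\{1,\dots,3n\}\}$. Let $t$ be a power of two, $\lg$ the base-2 logarithm, and for $i\in\{0,\dots,t-1\}$ let $\mathcal A_i=\{a^i_1,\dots,a^i_{3n}\}$ be a set of $3n$ integers from $\widetilde{\mathcal A}_n$ with sum $3B_n$. Let $X=3tnB_n$, $B=B_n+nX$, $Y=3t^2nB$, $Z=(\lg t)^2Y^2 3^{(\lg t)^2}$, $T=\sum_{k=0}^{(\lg t)^2-1}3^k$, and fix a bijection $f:\{0,\dots,\lg t-1\}^2\to\{0,\dots,(\lg t)^2-1\}$. Items (weight $w$, profit $p$): encoding items $x^i_j$ ($0\le i\le t-1$, $1\le j\le 3n$) with $w=X+a^i_j$, $p=X+a^i_j+3iB$, forming $\mathcal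 X$; quadratization items forming $\mathcal Y$: for $0\le k<\ell\le\lg t-1$, $y^{1,0}_{k,\ell}$ with $w=p=3^{f(k,\ell)}Y$, $y^{0,1}_{k,\ell}$ with $w=p=3^{f(\ell,k)}Y$, $y^{1,1}_{k,\ell}$ with $w=(3^{f(k,\ell)}+3^{f(\ell,k)})Y$, $p=w+2^{k+\ell}\cdot9nB$, and for $0\le k\le\lg t-1$, $y^{1,1}_{k,k}$ with $w=3^{f(k,k)}Y$, $p=w+2^{2k}\cdot4.5nB+2^k\cdot1.5nB$; index items forming $\mathcal Z$: for $0\le k\le\lg t-1$, $z^0_k$ with $w=p=2^kZ+\sum_{\ell=0}^{\lg t-1}3^{f(k,\ell)}Y$ and $z^1_k$ with $w=p=2^kZ+2^k\cdot 3B$. For a set $\mathcal S$ of items, $w(\mathcal S)=\sum_{x\in\mathcal S}w(x)$, $p(\mathcal S)=\sum_{x\in\mathcal S}p(x)$. For an item $x$: $w_Z(x)=\lfloor w(x)/Z\rfloor$, $p_Z(x)=\lfloor p(x)/Z\rfloor$, $w_Y(x)=\lfloor (w(x)-Z\,w_Z(x))/Y\rfloor$, $p_Y(x)=\lfloor (p(x)-Z\,p_Z(x))/Y\rfloor$; these are extended to sets of items by summation over the items. For $i\in\{0,\dots,t-1\}$ with binary digits $i(0),\dots,i(\lg t-1)$ ($i=\sum_k i(k)2^k$): $\mathcal Z_i=\{z^{i(k)}_k:0\le k\le\lg t-1\}$ and $\mathcal Y_i=\{y^{i(k),i(\ell)}_{k,\ell}:0\le k\le\ell\le\lg t-1,\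 (i(k),i(\ell))\neq(0,0)\}$. *)

From mathcomp Require Import all_boot.
Set Implicit Arguments. Unset Strict Implicit. Unset Printing Implicit Defensive.

Section Construction.
(* L = lg t, so t = 2^L; a i j = a^i_{j+1}; f the fixed bijection. *)
Variables (n L : nat) (a : 'I_(2 ^ L) -> 'I_(3 * n) -> nat)
          (f : 'I_L * 'I_L -> 'I_(L * L)).

Definition Bn : nat := \sum_(1 <= j < (3 * n).+1) (3 * n + 1) ^ j.
Definition Atilde (v : nat) : Prop :=
  exists j1 j2 j3, [/\ 1 <= j1 <= 3 * n, 1 <= j2 <= 3 * n, 1 <= j3 <= 3 * n &
    v = (3 * n + 1) ^ j1 + (3 * n + 1) ^ j2 + (3 * n + 1) ^ j3].

Definition Xc : nat := 3 * 2 ^ L * n * Bn.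
Definition Bc : nat := Bn + n * Xc.
Definition Yc : nat := 3 * (2 ^ L) ^ 2 * n * Bc.
Definition Zc : nat := L ^ 2 * Yc ^ 2 * 3 ^ (L ^ 2).
Definition Tc : nat := \sum_(k < L ^ 2) 3 ^ k.

(* Items: inl (i,j) = x^i_{j+1};
          inr (inl (k,l,b1,b2)) = y^{b1,b2}_{k,l} (only valid indices are items);
          inr (inr (k,b)) = z^b_k. *)
Definition item : finType :=
  ('I_(2 ^ L) * 'I_(3 * n) + (('I_L * 'I_L * bool * bool) + ('I_L * bool)))%type.

Definition valid (x : item) : bool :=
  match x with
  | inl _ => true
  | inr (inl (k, l, b1, b2)) =>
      ((k < l) && (b1 || b2)) || [&& (k == l :> nat), b1 & b2]
  | inr (inr _) => true
  end.

Definition allItems : {set item} := [set x | valid x].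
Definition Yitems : {set item} :=
  [set x | valid x & if x is inr (inl _) then true else false].
Definition Zitems : {set item} :=
  [set x | if x is inr (inr _) then true else false].

Definition weight (x : item) : nat :=
  match x with
  | inl (i, j) => Xc + a i j
  | inr (inl (k, l, b1, b2)) =>
      if b1 && b2 then
        (if k < l then (3 ^ f (k, l) + 3 ^ f (l, k)) * Yc
         else 3 ^ f (k, k) * Yc)
      else if b1 then 3 ^ f (k, l) * Yc
      else if b2 then 3 ^ f (l, k) * Yc
      else 0
  | inr (inr (k, b)) =>
      if b then 2 ^ k * Zc + 2 ^ k * 3 * Bc
      else 2 ^ k * Zc + \sum_(l < L) 3 ^ f (k, l) * Yc
  end.

(* For y^{1,1}_{k,k}: 2^{2k} 4.5 nB + 2^k 1.5 nB = (2^{2k} 9nB + 2^k 3nB)/2,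
   an exact division (the numerator is even). *)
Definition profit (x : item) : nat :=
  match x with
  | inl (i, j) => Xc + a i j + 3 * i * Bc
  | inr (inl (k, l, b1, b2)) =>
      if b1 && b2 then
        (if k < l then weight x + 2 ^ (k + l) * 9 * n * Bc
         else weight x + (2 ^ (2 * k) * 9 * n * Bc + 2 ^ k * 3 * n * Bc) %/ 2)
      else weight x
  | inr (inr _) => weight x
  end.

Definition wS (S : {set item}) : nat := \sum_(x in S) weight x.
Definition pS (S : {set item}) : nat := \sum_(x in S) profit x.

Definition wZ (x : item) : nat := weight x %/ Zc.
Definition pZ (x : item) : nat := profit x %/ Zc.
Definition wY (x : item) : nat := (weight x - Zc * wZ x) %/ Yc.
Definition pY (x : item) : nat := (profit x - Zc * pZ x) %/ Yc.
Definition wZS (S : {set item}) : nat := \sum_(x in S) wZ x.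
Definition pZS (S : {set item}) : nat := \sum_(x in S) pZ x.
Definition wYS (S : {set item}) : nat := \sum_(x in S) wY x.
Definition pYS (S : {set item}) : nat := \sum_(x in S) pY x.

Definition bit (i k : nat) : bool := odd (i %/ 2 ^ k).

Definition Zset (i : nat) : {set item} :=
  [set x : item | if x is inr (inr (k, b)) then b == bit i k else false].
Definition Yset (i : nat) : {set item} :=
  [set x : item | if x is inr (inl (k, l, b1, b2)) then
     [&& k <= l, b1 == bit i k, b2 == bit i l & b1 || b2] else false].

End Construction.

From mathcomp Require Import all_boot zify.
Set Implicit Arguments. Unset Strict Implicit. Unset Printing Implicit Defensive.

(* Every item x has weight c Z + (V Y + e) and profit c Z + (V Y + e') with
   e, e' < Y and V Y + e < Z, where the Z-level c is 2^k for z^b_k and 0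
   otherwise, and the Y-level V is a sum of distinct powers 3^(f q) over the
   cells q that x covers: z^0_k covers every cell (k, l), and y^(b1,b2)_(k,l)
   covers (k, l) if b1 and (l, k) if b2.  Hence w_Z = p_Z and w_Y = p_Y, and
   the four bounds force the Z-levels of S to add up to t - 1 = sum_k 2^k and
   the Y-levels to T = sum_q 3^(f q).  A binary digit has at most two
   contributors and a ternary digit at most three, so no carries occur: every
   k is the index of exactly one z-item of S and every cell is covered by
   exactly one item of S.  Reading the bits of i off the z-items, these exact
   covers leave Y_i as the only possibility, except that y^(1,0)_(k,l) and
   y^(0,1)_(k,l) could replace y^(1,1)_(k,l); optimality excludes this, since
   merging them keeps the weight and gains 2^(k+l) 9nB of profit. *)

Lemma repunit_digits b m (d : 'I_m -> nat) : 1 < b -> (forall k, d k <= b) ->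
  \sum_(k < m) d k * b ^ k = \sum_(k < m) b ^ k -> forall k, d k = 1.
Proof.
move=> b_gt1; elim: m d => [|m IHm] d d_le; first by move=> _ [].
rewrite !big_ord_recl !expn0 muln1.
have shift (F : 'I_m -> nat) :
    \sum_(i < m) F i * b ^ bump 0 i = b * \sum_(i < m) F i * b ^ i.
  by rewrite big_distrr; apply: eq_bigr => i _; rewrite /bump add1n expnS mulnCA.
have shift1 : \sum_(i < m) b ^ bump 0 i = b * \sum_(i < m) b ^ i.
  by rewrite big_distrr; apply: eq_bigr => i _; rewrite /bump add1n expnS.
rewrite shift shift1 => E.
have d0 : d ord0 = 1.
  have := congr1 (modn^~ b) E; rewrite ![b * _]mulnC ![_ + _ * b]addnC.
  rewrite !modnMDl (modn_small b_gt1).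
  by case: ltngtP (d_le ord0) => // [d0_lt _|->]; rewrite ?modnn // modn_small.
move: E; rewrite d0 => /addnI /eqP; rewrite eqn_pmul2l ?(ltnW b_gt1) // => /eqP E k.
case: (unliftP ord0 k) => [j ->|->] //.
exact: (IHm (d \o lift ord0) (fun j => d_le _) E).
Qed.

Lemma repunit_cover_once (T I : finType) (S : {set T}) (c : T -> I -> bool) b m
    (h : I -> 'I_m) :
  1 < b -> bijective h -> (forall i, \sum_(x in S) c x i <= b) ->
  \sum_(x in S) \sum_i c x i * b ^ h i = \sum_i b ^ h i ->
  forall i, \sum_(x in S) c x i = 1.
Proof.
move=> b_gt1 [h' hK h'K] c_le; rewrite exchange_big /=.
under eq_bigr do rewrite -big_distrl /=.
rewrite (reindex h') /=; last by exists h => p _; rewrite ?h'K ?hK.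
rewrite [in X in _ = X](reindex h') /=; last by exists h => p _; rewrite ?h'K ?hK.
under eq_bigr do rewrite h'K; under [in X in _ = X]eq_bigr do rewrite h'K.
move=> /(repunit_digits b_gt1 (fun p => c_le (h' p))) once i.
by rewrite -[i]hK once.
Qed.

Lemma sum_mem_count (T : finType) (S : {set T}) (P : pred T) (s : seq T) :
  uniq s -> {in S, forall x, P x = (x \in s)} -> \sum_(x in S) P x = count (mem S) s.
Proof.
move=> s_uniq P_s; rewrite (eq_bigr (fun x => if x \in s then 1 else 0)); last first.
  by move=> x xS; rewrite P_s //; case: (x \in s).
rewrite -big_mkcondr sum1_card -size_filter -(card_uniqP _) ?filter_uniq //.
by apply: eq_card => x; rewrite mem_filter unfold_in.
Qed.

Lemma bit_binary m (h : 'I_m -> bool) (k : 'I_m) :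
  bit (\sum_(j < m) h j * 2 ^ j) k = h k.
Proof.
rewrite /bit; elim: m h k => [|m IHm] h k; first by case: k.
rewrite big_ord_recl expn0 muln1.
have -> : \sum_(j < m) h (lift ord0 j) * 2 ^ bump 0 j =
          (\sum_(j < m) h (lift ord0 j) * 2 ^ j) * 2.
  by rewrite big_distrl; apply: eq_bigr => j _; rewrite /bump add1n expnS mulnCA mulnC.
case: (unliftP ord0 k) => [j ->|->] /=; last first.
  by rewrite expn0 divn1 oddD oddM andbF addbF; case: (h ord0).
rewrite /bump add1n expnS divnMA divnDMl // (@divn_small (h ord0)) ?add0n //.
  exact: IHm.
by case: (h ord0).
Qed.

Lemma divn_levels Z Y c V e : e < Y -> (V + 1) * Y <= Z ->
  (c * Z + (V * Y + e)) %/ Z = c /\ (c * Z + (V * Y + e) - Z * c) %/ Y = V.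
Proof.
move=> e_lt VY_le; have Y_gt0 : 0 < Y by apply: leq_ltn_trans e_lt.
have rest_lt : V * Y + e < Z by apply: leq_trans VY_le; rewrite mulnDl mul1n ltn_add2l.
have Z_gt0 : 0 < Z by apply: leq_ltn_trans rest_lt.
by rewrite divnMDl // divn_small // mulnC addKn divnMDl // divn_small // !addn0.
Qed.

Lemma merge_pair_improves (T : finType) (S : {set T}) (w p : T -> nat) u v m :
  u \in S -> v \in S -> u != v -> m \notin S ->
  w m <= w u + w v -> p u + p v < p m ->
  let S' := m |: (S :\ u :\ v) in
  \sum_(x in S') w x <= \sum_(x in S) w x /\ \sum_(x in S) p x < \sum_(x in S') p x.
Proof.
move=> uS vS uv mS w_le p_lt S'.
have vSu : v \in S :\ u by rewrite !inE eq_sym uv.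
have mSuv : m \notin S :\ u :\ v by rewrite !inE (negbTE mS) !andbF.
have split F : \sum_(x in S) F x = F u + F v + \sum_(x in S :\ u :\ v) F x.
  by rewrite (big_setD1 u uS) (big_setD1 v vSu) /= addnA.
by rewrite /S' !big_setU1 //= !split; split; [rewrite leq_add2r | rewrite ltn_add2r].
Qed.

Section Items.
Variables (n L : nat) (a : 'I_(2 ^ L) -> 'I_(3 * n) -> nat)
          (f : 'I_L * 'I_L -> 'I_(L * L)).
Local Notation item := (item n L).

Definition zitem k b : item := inr (inr (k, b)).
Definition yitem k l b1 b2 : item := inr (inl (k, l, b1, b2)).

Definition zcovers (x : item) (k : 'I_L) : bool :=
  if x is inr (inr (k', _)) then k' == k else false.

Definition covers (x : item) (q : 'I_L * 'I_L) : bool :=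
  match x with
  | inl _ => false
  | inr (inl (k, l, b1, b2)) => b1 && (q == (k, l)) || [&& b2, k != l & q == (l, k)]
  | inr (inr (k, b)) => ~~ b && (q.1 == k)
  end.

Definition coverers (q : 'I_L * 'I_L) : seq item :=
  let: (k, l) := q in
  if k < l then [:: zitem k false; yitem k l true false; yitem k l true true]
  else if l < k then [:: zitem k false; yitem l k false true; yitem l k true true]
  else [:: zitem k false; yitem k k true true].

Lemma zcoversE x k : zcovers x k = (x \in [:: zitem k false; zitem k true]).
Proof.
case: x => [[i j]|[[[[k' l'] b1] b2]|[k' b]]] /=;
  rewrite !inE -?sum_eqE /= -?sum_eqE /= ?xpair_eqE //.
by case: b; rewrite ?andbT ?andbF ?orbF.
Qed.

Lemma coversE x q : valid x -> covers x q = (x \in coverers q).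
Proof.
case: q => k l; rewrite /coverers.
case: x => [//|[[[[k' l'] b1] b2]|[k' b]]] /= V;
  case: ltngtP => kl; rewrite !inE -?sum_eqE /= -?sum_eqE /= ?xpair_eqE -?val_eqE //=.
1-3: by case: b1 b2 V => [] [] /=; lia.
all: by case: b; lia.
Qed.

Lemma uniq_coverers q : uniq (coverers q).
Proof.
case: q => k l; rewrite /coverers.
by case: ltngtP => _; rewrite /= ?inE -?sum_eqE /= -?sum_eqE /= ?xpair_eqE ?andbF.
Qed.

Lemma size_coverers q : size (coverers q) <= 3.
Proof. by case: q => k l; rewrite /coverers; case: ltngtP. Qed.

Definition zpart (x : item) : nat := \sum_(k < L) zcovers x k * 2 ^ k.
Definition ypart (x : item) : nat := \sum_q covers x q * 3 ^ f q.

Lemma zpart_zitem k b : zpart (zitem k b) = 2 ^ k.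
Proof.
rewrite /zpart (bigD1 k) //= eqxx mul1n big1 ?addn0 // => k' /negbTE.
by rewrite eq_sym => ->.
Qed.

Lemma ypart_zitem k b : ypart (zitem k b) = ~~ b * \sum_(l < L) 3 ^ f (k, l).
Proof.
rewrite /ypart (eq_bigr (fun q => (~~ b && (q.1 == k)) * 3 ^ f (q.1, q.2))) => [|[] //].
rewrite -(pair_bigA _ (fun k' l => (~~ b && (k' == k)) * 3 ^ f (k', l))) /=.
rewrite (bigD1 k) //= [X in _ + X]big1 ?addn0 => [|k' /negbTE k'k].
  by rewrite big_distrr; apply: eq_bigr => l _; rewrite eqxx andbT.
by apply: big1 => l _; rewrite k'k andbF.
Qed.

Lemma ypart_yitem k l b1 b2 :
  ypart (yitem k l b1 b2) = b1 * 3 ^ f (k, l) + (b2 && (k != l)) * 3 ^ f (l, k).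
Proof.
have single (c : bool) q0 : \sum_q (c && (q == q0)) * 3 ^ f q = c * 3 ^ f q0.
  by rewrite (bigD1 q0) //= eqxx andbT big1 ?addn0 // => q /negbTE ->; rewrite andbF.
rewrite -single -[(b2 && _) * _]single -big_split /=; apply: eq_bigr => q _.
rewrite -mulnDl; congr (_ * _).
case: q => k' l'; case: b1; case: b2; rewrite /= ?xpair_eqE ?xpair_eqE -?val_eqE /=; lia.
Qed.

Hypothesis n_gt0 : 0 < n.

Local Notation B := (Bc n L).
Local Notation Y := (Yc n L).

Lemma expn_le_Bn v : 1 <= v <= 3 * n -> (3 * n + 1) ^ v <= Bn n.
Proof.
move=> v_range; rewrite /Bn (bigD1_seq v) ?iota_uniq ?leq_addr //=.
by rewrite mem_index_iota ltnS.
Qed.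

Lemma Bn_gt0 : 0 < Bn n.
Proof. by apply: leq_trans (expn_le_Bn (v := 1) _); rewrite ?expn1 ?addn1 //; lia. Qed.

Lemma Atilde_le v : Atilde n v -> v <= 3 * Bn n.
Proof.
case=> [j1 [j2 [j3 [/expn_le_Bn h1 /expn_le_Bn h2 /expn_le_Bn h3 ->]]]]; lia.
Qed.

Lemma encoding_profit_lt i j : Atilde n (a i j) -> profit a f (inl (i, j)) < Y.
Proof.
move=> /Atilde_le a_le; rewrite /profit /Yc /Bc /Xc -mulnn.
have t_gt0 : 0 < 2 ^ L by rewrite expn_gt0.
have := ltn_ord i; have := Bn_gt0.
move: (2 ^ L) (Bn n) (i : nat) a_le t_gt0 => t b i' a_le t_gt0 b_gt0 i_lt.
have tn_gt0 : 0 < t * n by rewrite muln_gt0 t_gt0.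
have b_le := leq_pmull b tn_gt0.
have X_le := leq_pmull (3 * t * n * b) n_gt0.
have t_le : t <= t * t * n by rewrite -mulnA leq_pmulr.
set B' := b + _; have B_gt0 : 0 < B' by rewrite addn_gt0 b_gt0.
nia.
Qed.

Lemma Bc_gt0 : 0 < B.
Proof. by rewrite addn_gt0 Bn_gt0. Qed.

Lemma Yc_gt0 : 0 < Y.
Proof. by rewrite /Yc !muln_gt0 expn_gt0 n_gt0 Bc_gt0. Qed.

Lemma pair_bonus_lt (k l : 'I_L) : k < l -> 2 ^ (k + l) * 9 * n * B < Y.
Proof.
move=> kl; have P_le : 2 ^ (k + l) * 4 <= (2 ^ L) ^ 2.
  by rewrite -expnM -(expnD 2 _ 2) leq_exp2l //; have := ltn_ord l; lia.
have P_gt0 : 0 < 2 ^ (k + l) by rewrite expn_gt0.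
have := Bc_gt0; rewrite /Yc; move: (2 ^ (k + l)) ((2 ^ L) ^ 2) B P_le P_gt0.
move=> P T b *; nia.
Qed.

Lemma diag_bonus_lt (k : 'I_L) :
  (2 ^ (2 * k) * 9 * n * B + 2 ^ k * 3 * n * B) %/ 2 < Y.
Proof.
have P_le : 2 ^ (2 * k) * 4 <= (2 ^ L) ^ 2.
  by rewrite -expnM -(expnD 2 _ 2) leq_exp2l //; have := ltn_ord k; lia.
have Q_le : 2 ^ k * 2 <= (2 ^ L) ^ 2.
  rewrite -expnM -(expnD 2 _ 1) leq_exp2l //; have := ltn_ord k; lia.
have nB_gt0 : 0 < n * B by rewrite muln_gt0 n_gt0 Bc_gt0.
have Q_gt0 : 0 < 2 ^ k by rewrite expn_gt0.
rewrite ltn_divLR // /Yc; move: (2 ^ (2 * k)) (2 ^ k) ((2 ^ L) ^ 2) P_le Q_le Q_gt0.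
move=> P Q T P_le Q_le Q_gt0; have PQ_lt : 9 * P + 3 * Q < 6 * T by lia.
nia.
Qed.

Lemma z_bonus_lt (k : 'I_L) : 2 ^ k * 3 * B < Y.
Proof.
have Q_lt : 2 ^ k < (2 ^ L) ^ 2.
  by rewrite -expnM ltn_exp2l //; have := ltn_ord k; lia.
have := Bc_gt0; have := leq_pmulr ((2 ^ L) ^ 2) n_gt0; rewrite /Yc.
move: (2 ^ k) ((2 ^ L) ^ 2) B Q_lt => Q T b *; nia.
Qed.

Lemma Tc_lt : Tc L < 3 ^ (L ^ 2).
Proof.
have := predn_exp 3 (L ^ 2); rewrite -/(Tc L) => E.
by rewrite -[3 ^ _]prednK ?expn_gt0 // E ltnS leq_pmull.
Qed.

Hypothesis f_bij : bijective f.

Lemma sum_cells_Tc : \sum_q 3 ^ f q = Tc L.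
Proof.
rewrite /Tc (_ : L ^ 2 = L * L) ?mulnn //.
by rewrite [RHS](reindex f) //; apply: onW_bij.
Qed.

Lemma ypart_le x : ypart x <= Tc L.
Proof.
by rewrite -sum_cells_Tc; apply: leq_sum => q _; case: (covers x q); rewrite ?mul1n.
Qed.

Lemma ypart_level_le x : 0 < L -> (ypart x + 1) * Y <= Zc n L.
Proof.
move=> L_gt0; have V_lt : ypart x + 1 <= 3 ^ (L ^ 2).
  by rewrite addn1; apply: leq_ltn_trans (ypart_le x) Tc_lt.
have Y_le : Y <= L ^ 2 * Y ^ 2.
  by rewrite -[Y ^ 2]mulnn mulnA leq_pmull // muln_gt0 expn_gt0 L_gt0 Yc_gt0.
by rewrite /Zc mulnC leq_mul.
Qed.

Hypothesis a_Atilde : forall i j, Atilde n (a i j).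

Lemma item_levels x : valid x -> exists ew ep, [/\ ew < Y, ep < Y,
  weight a f x = zpart x * Zc n L + (ypart x * Y + ew) &
  profit a f x = zpart x * Zc n L + (ypart x * Y + ep)].
Proof.
case: x => [[i j]|[[[[k l] b1] b2]|[k b]]] /= V.
- have [-> ->] : zpart (inl (i, j)) = 0 /\ ypart (inl (i, j)) = 0 by split; apply: big1.
  have p_lt := encoding_profit_lt (a_Atilde i j).
  exists (weight a f (inl (i, j))), (profit a f (inl (i, j))); split => //.
  by apply: leq_ltn_trans p_lt; rewrite leq_addr.
- have -> : zpart (yitem k l b1 b2) = 0 by apply: big1.
  rewrite ypart_yitem /weight /profit /= mul0n.
  case/orP: V => [/andP[kl b12]|/and3P[/eqP/val_inj kl -> ->]]; last first.
    subst l; rewrite eqxx ltnn mul1n addn0.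
    exists 0, ((2 ^ (2 * k) * 9 * n * B + 2 ^ k * 3 * n * B) %/ 2).
    by rewrite /= add0n addn0 Yc_gt0 diag_bonus_lt.
  have -> : k != l by rewrite -val_eqE /= neq_ltn kl.
  case: b1 b2 b12 => [] [] // _; rewrite kl ?mul0n ?mul1n ?add0n ?addn0.
  + by exists 0, (2 ^ (k + l) * 9 * n * B); rewrite add0n addn0 Yc_gt0 pair_bonus_lt.
  + by exists 0, 0; rewrite add0n !addn0 Yc_gt0.
  + by exists 0, 0; rewrite add0n !addn0 Yc_gt0.
- rewrite -/(zitem k b) zpart_zitem ypart_zitem /weight /profit.
  case: b => /=; first by exists (2 ^ k * 3 * B), (2 ^ k * 3 * B); rewrite z_bonus_lt mulnC.
  by exists 0, 0; rewrite Yc_gt0 mul1n addn0 big_distrl mulnC.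
Qed.

Lemma item_digits x : 0 < L -> valid x ->
  [/\ wZ a f x = zpart x, pZ a f x = zpart x, wY a f x = ypart x & pY a f x = ypart x].
Proof.
move=> L_gt0 /item_levels[ew [ep [ew_lt ep_lt w_eq p_eq]]].
have [wZ_eq wY_eq] := divn_levels (zpart x) ew_lt (ypart_level_le x L_gt0).
have [pZ_eq pY_eq] := divn_levels (zpart x) ep_lt (ypart_level_le x L_gt0).
by rewrite /wY /pY /wZ /pZ w_eq p_eq wZ_eq wY_eq pZ_eq pY_eq.
Qed.

End Items.

Lemma pair_cover_pattern (z1 z2 u10 u01 u11 : bool) :
  ~~ z1 + u10 + u11 = 1 -> ~~ z2 + u01 + u11 = 1 -> (u10 -> u01 -> u11) ->
  [/\ u10 = z1 && ~~ z2, u01 = ~~ z1 && z2 & u11 = z1 && z2].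
Proof. by case: z1 z2 u10 u01 u11 => [] [] [] [] [] //= _ _ /(_ isT isT). Qed.

Section Pattern.
Variables (n L : nat) (S : {set item n L}).
Hypothesis S_valid : S \subset allItems n L.
Hypothesis z_once : forall k, count (mem S) [:: zitem n k false; zitem n k true] = 1.
Hypothesis y_once : forall q, count (mem S) (coverers n q) = 1.
Hypothesis merged : forall k l : 'I_L, k < l ->
  yitem n k l true false \in S -> yitem n k l false true \in S -> yitem n k l true true \in S.

Let zbit (k : 'I_L) : bool := zitem n k true \in S.

Lemma valid_in x : x \in S -> valid x.
Proof. by move/(subsetP S_valid); rewrite inE. Qed.

Lemma zitem_in k b : (zitem n k b \in S) = (b == zbit k).
Proof. by have := z_once k; rewrite /zbit /=; case: b; case: (_ \in S); case: (_ \in S). Qed.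

Lemma yitem_in k l b1 b2 :
  (yitem n k l b1 b2 \in S) = [&& k <= l, b1 == zbit k, b2 == zbit l & b1 || b2].
Proof.
have invalid : ~~ valid (yitem n k l b1 b2) -> yitem n k l b1 b2 \notin S.
  by apply: contra; apply: valid_in.
case: (ltngtP k l) => kl.
- have := y_once (k, l); have := y_once (l, k).
  rewrite /coverers kl ltnNge (ltnW kl) /= !zitem_in !addn0 !addnA => Pl Pk.
  have [y10 y01 y11] := pair_cover_pattern Pk Pl (merged kl).
  case: b1 b2 invalid => [] [] invalid; rewrite ?y10 ?y01 ?y11.
  1-3: by case: (zbit k) (zbit l) => [] [].
  by rewrite !andbF; apply/negbTE/invalid; rewrite /= !andbF.
- by apply/negbTE/invalid; rewrite /= ltnNge (ltnW kl) (gtn_eqF kl).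
- have kl' := val_inj kl; subst l; have := y_once (k, k).
  rewrite /coverers ltnn /= zitem_in => Pk.
  case: b1 b2 invalid => [] [] /= invalid.
    by move: Pk; case: (zbit k); case: (_ \in S).
  all: by rewrite (negbTE (invalid _)) ?ltnn ?andbF //; case: (zbit k).
Qed.

Lemma membership_pattern :
  exists i : 'I_(2 ^ L), S :&: Yitems n L = Yset n L i /\ S :&: Zitems n L = Zset n L i.
Proof.
pose i := \sum_(k < L) zbit k * 2 ^ k.
have i_lt : i < 2 ^ L.
  rewrite -[2 ^ L]prednK ?expn_gt0 // predn_exp mul1n ltnS.
  by apply: leq_sum => k _; case: (zbit k); rewrite ?mul1n.
exists (Ordinal i_lt); have bitE (k : 'I_L) : bit i k = zbit k by exact: bit_binary.
split; apply/setP => -[x|[[[[k l] b1] b2]|[k b]]]; rewrite !inE /= ?andbF ?andbT //.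
  rewrite -/(yitem n k l b1 b2) andb_idr; first by rewrite yitem_in !bitE.
  exact: valid_in.
by rewrite -/(zitem n k b) zitem_in bitE.
Qed.

End Pattern.

Section Covering.
Variables (n L : nat) (a : 'I_(2 ^ L) -> 'I_(3 * n) -> nat)
          (f : 'I_L * 'I_L -> 'I_(L * L)).
Hypotheses (n_gt0 : 0 < n) (f_bij : bijective f)
           (a_Atilde : forall i j, Atilde n (a i j)).
Variable S : {set item n L}.
Hypothesis S_valid : S \subset allItems n L.

Lemma level_sums : 0 < L ->
  [/\ wZS a f S = \sum_(x in S) zpart x, pZS a f S = \sum_(x in S) zpart x,
      wYS a f S = \sum_(x in S) ypart f x & pYS a f S = \sum_(x in S) ypart f x].
Proof.
move=> L_gt0; have digits x (xS : x \in S) :=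
  item_digits n_gt0 f_bij a_Atilde L_gt0 (valid_in S_valid xS).
by split; apply: eq_bigr => x /digits[].
Qed.

Lemma z_covered_once : wZS a f S <= 2 ^ L - 1 -> 2 ^ L - 1 <= pZS a f S ->
  forall k, count (mem S) [:: zitem n k false; zitem n k true] = 1.
Proof.
move=> wZ_le pZ_ge k; have [L0|L_gt0] := posnP L.
  by move: (ltn_ord k); rewrite [X in _ < X]L0.
have zcount k' :
    \sum_(x in S) zcovers x k' = count (mem S) [:: zitem n k' false; zitem n k' true].
  apply: sum_mem_count => [|x _]; last exact: zcoversE.
  by rewrite /= inE andbT; apply/eqP => -[].
rewrite -zcount; apply: (@repunit_cover_once _ _ S (@zcovers n L) 2 L id) => // [|k'|].
- by exists id.
- by rewrite zcount (leq_trans (count_size _ _)).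
have [wZ_eq pZ_eq _ _] := level_sums L_gt0.
have sum2 : \sum_(i < L) 2 ^ i = 2 ^ L - 1 by rewrite subn1 predn_exp mul1n.
rewrite -[LHS]/(\sum_(x in S) zpart x) sum2 -wZ_eq.
by apply/anti_leq; rewrite wZ_le wZ_eq -pZ_eq pZ_ge.
Qed.

Lemma y_covered_once : wYS a f S <= Tc L -> Tc L <= pYS a f S ->
  forall q, count (mem S) (coverers n q) = 1.
Proof.
move=> wY_le pY_ge [k l]; have [L0|L_gt0] := posnP L.
  by move: (ltn_ord k); rewrite [X in _ < X]L0.
have ycount q : \sum_(x in S) covers x q = count (mem S) (coverers n q).
  apply: sum_mem_count => [|x xS]; first exact: uniq_coverers.
  exact/coversE/(valid_in S_valid xS).
rewrite -ycount; apply: (@repunit_cover_once _ _ S (@covers n L) 3 (L * L) f) => // [q|].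
  by rewrite ycount (leq_trans (count_size _ _)) ?size_coverers.
have [_ _ wY_eq pY_eq] := level_sums L_gt0.
rewrite -[LHS]/(\sum_(x in S) ypart f x) sum_cells_Tc // -wY_eq.
by apply/anti_leq; rewrite wY_le wY_eq -pY_eq pY_ge.
Qed.

Lemma merge_yitems_improves (k l : 'I_L) : k < l ->
  yitem n k l true false \in S -> yitem n k l false true \in S ->
  yitem n k l true true \notin S ->
  exists S' : {set item n L}, S' \subset allItems n L /\
    wS a f S' <= wS a f S /\ pS a f S < pS a f S'.
Proof.
move=> kl y10 y01 y11.
have bonus_gt0 : 0 < 2 ^ (k + l) * 9 * n * Bc n L.
  by rewrite !muln_gt0 expn_gt0 n_gt0 Bc_gt0.
have [] := merge_pair_improves (w := weight a f) (p := profit a f) y10 y01 _ y11.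
- by apply/eqP => -[].
- by rewrite /weight /= kl mulnDl.
- by rewrite /profit /weight /= kl mulnDl -[X in X < _]addn0 ltn_add2l.
move=> w_le p_lt.
exists (yitem n k l true true |: (S :\ yitem n k l true false :\ yitem n k l false true)).
split=> //; apply/subsetP => x; rewrite !inE => /predU1P[->|/and3P[_ _ xS]].
  by rewrite /= kl.
exact: (valid_in S_valid xS).
Qed.

End Covering.

Theorem lemma6 (n L : nat) (a : 'I_(2 ^ L) -> 'I_(3 * n) -> nat)
    (f : 'I_L * 'I_L -> 'I_(L * L)) :
  1 <= n ->
  bijective f ->
  (forall i j, Atilde n (a i j)) ->
  (forall i, \sum_(j < 3 * n) a i j = 3 * Bn n) ->
  forall S : {set item n L},
  S \subset allItems n L ->
  wZS a f S <= 2 ^ L - 1 ->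
  wYS a f S <= Tc L ->
  2 ^ L - 1 <= pZS a f S ->
  Tc L <= pYS a f S ->
  ~ (exists S' : {set item n L}, S' \subset allItems n L /\
        wS a f S' <= wS a f S /\ pS a f S < pS a f S') ->
  exists i : 'I_(2 ^ L),
    S :&: Yitems n L = Yset n L i /\ S :&: Zitems n L = Zset n L i.
Proof.
move=> n_gt0 f_bij a_Atilde _ S S_valid wZ_le wY_le pZ_ge pY_ge S_opt.
apply: (membership_pattern S_valid).
- exact: (z_covered_once n_gt0 f_bij a_Atilde S_valid wZ_le pZ_ge).
- exact: (y_covered_once n_gt0 f_bij a_Atilde S_valid wY_le pY_ge).
move=> k l kl y10 y01; apply/negPn/negP => y11.
exact/S_opt/(merge_yitems_improves a f n_gt0 S_valid kl y10 y01 y11).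
Qed.
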